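(* Assume $a/b>\sqrt2$, $|u|<u_{\max}$ and $a^2+(u^2-2)c^2\ne0$. Let $\mathcal{C}^\dagger$ be the unit circle centered at the focus $f_1=(-c,0)$. The images of the four vertices $P_1,\dots,P_4$ of the self-intersected 4-periodic under inversion in $\mathcal{C}^\dagger$ are collinear and lie on the radical axis of $\mathcal{C}^\dagger$ and $\mathcal{C}$; likewise the images of the four vertices of its outer polygon under inversion in $\mathcal{C}^\dagger$ are collinear and lie on the radical axis of $\mathcal{C}^\dagger$ and $\mathcal{C}'$.
   Context: The elliptic billiard is $\mathcal{E}: x^2/a^2+y^2/b^2=1$, $a>b>0$, $c=\sqrt{a^2-b^2}$, foci $f_1=(-c,0)$, $f_2=(c,0)$. For $a/b>\sqrt2$ the self-intersected 4-periodics are parametrized by $u$, $|u|\le u_{\max}:=\frac{a}{c^2}\sqrt{a^2-2b^2}$, with vertices $P_1=(au,\,b\sqrt{1-u^2})$, $P_3=(-au,\,b\sqrt{1-u^2})$, $P_2=\left(-\frac{a\sqrt{a^2(a^2-2b^2)-c^4u^2}}{c^2\sqrt{1-u^2}},-\frac{b^3}{c^2\sqrt{1-u^2}}\right)$, $P_4=\left(\frac{a\sqrt{a^2(a^2-2b^2)-c^4u^2}}{c^2\sqrt{1-u^2}},-\frac{b^3}{c^2\sqrt{1-u^2}}\right)$. The outer polygon has vertices $P_i'$ = intersection of the tangent lines to $\mathcal{E}$ at $P_i$ and $P_{i+1}$ (indices mod 4). $\mathcal{C}$ is the circle with center $C=\left(0,\frac{c^2u^2-a^2+2b^2}{2b\sqrt{1-u^2}}\right)$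 and radius $R=\frac{a^2-c^2u^2}{2b\sqrt{1-u^2}}$; $\mathcal{C}'$ is the circle with center $C'=\left(0,-\frac{2bc^2\sqrt{1-u^2}}{a^2+(u^2-2)c^2}\right)$ and radius $\left|\frac{c(c^2u^2-a^2)}{a^2+(u^2-2)c^2}\right|$. Inversion in a circle of center $Z$ and radius $\rho$ sends $X\neq Z$ to $Z+\rho^2(X-Z)/|X-Z|^2$. *)

From mathcomp Require Import all_boot all_order all_algebra.
Set Implicit Arguments. Unset Strict Implicit. Unset Printing Implicit Defensive.
Import Order.TTheory GRing.Theory Num.Theory.
Local Open Scope ring_scope.

Section Defs.
Variable R : rcfType.
Notation pt := (R * R)%type.

Definition cfoc (a b : R) : R := Num.sqrt (a ^+ 2 - b ^+ 2).

Definition umax (a b : R) : R :=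
  a / (cfoc a b) ^+ 2 * Num.sqrt (a ^+ 2 - 2 * b ^+ 2).

Definition P1 (a b u : R) : pt := (a * u, b * Num.sqrt (1 - u ^+ 2)).
Definition P3 (a b u : R) : pt := (- (a * u), b * Num.sqrt (1 - u ^+ 2)).
Definition P2 (a b u : R) : pt :=
  let c := cfoc a b in
  (- (a * Num.sqrt (a ^+ 2 * (a ^+ 2 - 2 * b ^+ 2) - c ^+ 4 * u ^+ 2))
       / (c ^+ 2 * Num.sqrt (1 - u ^+ 2)),
   - (b ^+ 3) / (c ^+ 2 * Num.sqrt (1 - u ^+ 2))).
Definition P4 (a b u : R) : pt :=
  let c := cfoc a b in
  ((a * Num.sqrt (a ^+ 2 * (a ^+ 2 - 2 * b ^+ 2) - c ^+ 4 * u ^+ 2))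
       / (c ^+ 2 * Num.sqrt (1 - u ^+ 2)),
   - (b ^+ 3) / (c ^+ 2 * Num.sqrt (1 - u ^+ 2))).

Definition on_tangent (a b : R) (P X : pt) : Prop :=
  X.1 * P.1 / a ^+ 2 + X.2 * P.2 / b ^+ 2 = 1.

Definition Ccenter (a b u : R) : pt :=
  (0, ((cfoc a b) ^+ 2 * u ^+ 2 - a ^+ 2 + 2 * b ^+ 2) / (2 * b * Num.sqrt (1 - u ^+ 2))).
Definition Cradius (a b u : R) : R :=
  (a ^+ 2 - (cfoc a b) ^+ 2 * u ^+ 2) / (2 * b * Num.sqrt (1 - u ^+ 2)).

Definition C'center (a b u : R) : pt :=
  let c := cfoc a b in
  (0, - (2 * b * c ^+ 2 * Num.sqrt (1 - u ^+ 2)) / (a ^+ 2 + (u ^+ 2 - 2) * c ^+ 2)).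
Definition C'radius (a b u : R) : R :=
  let c := cfoc a b in
  `| c * (c ^+ 2 * u ^+ 2 - a ^+ 2) / (a ^+ 2 + (u ^+ 2 - 2) * c ^+ 2) |.

Definition sqdist (X Y : pt) : R := (X.1 - Y.1) ^+ 2 + (X.2 - Y.2) ^+ 2.

Definition inversion (Z : pt) (rho : R) (X : pt) : pt :=
  (Z.1 + rho ^+ 2 * (X.1 - Z.1) / sqdist X Z,
   Z.2 + rho ^+ 2 * (X.2 - Z.2) / sqdist X Z).

Definition power (Z : pt) (rho : R) (X : pt) : R := sqdist X Z - rho ^+ 2.

Definition on_radical_axis (Z1 : pt) (r1 : R) (Z2 : pt) (r2 : R) (X : pt) : Prop :=
  power Z1 r1 X = power Z2 r2 X.

Definition collinear (s : seq pt) : Prop :=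
  exists alpha beta gamma : R, (alpha, beta) != (0, 0) /\
    all (fun X : pt => alpha * X.1 + beta * X.2 == gamma) s.

End Defs.

From mathcomp Require Import all_boot all_order all_algebra.
From mathcomp Require Import ring lra.
Import Order.TTheory GRing.Theory Num.Theory.
Set Implicit Arguments. Unset Strict Implicit. Unset Printing Implicit Defensive.
Local Open Scope ring_scope.

(* The proof rests on one classical principle: if the centre Z of an
   inversion lies on a circle Gamma, then the inversion maps Gamma \ {Z}
   into the radical axis of Gamma and the circle of inversion, which is a
   line.  So it suffices to show that the vertices P1..P4 lie on the circle C
   (and the outer vertices P1'..P4' on C'), that both C and C' pass through
   the focus f1, and that no inverted point is f1 itself.

   Then,
   for abstract c, s, t subject to c^2 = a^2 - b^2, s^2 = 1 - u^2 and
   t^2 = a^2 (a^2 - 2 b^2) - c^4 u^2, it computes the intersection points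
   of consecutive tangents and checks all incidences by field identities
   modulo these relations. *)

Section PlaneGeometry.
Variable R : rcfType.
Implicit Types (X Y Z C P F : R * R) (a b c m r rho : R).

Lemma sqdist_eq0 X Y : (sqdist X Y == 0) = (X == Y).
Proof.
case: X Y => [x1 x2] [y1 y2]; rewrite /sqdist /= paddr_eq0 ?sqr_ge0 //.
by rewrite !sqrf_eq0 !subr_eq0 xpair_eqE.
Qed.

Lemma power_diff_inversion Z rho C r X : X != Z ->
  power Z rho (inversion Z rho X) - power C r (inversion Z rho X) =
  rho ^+ 2 * (sqdist Z C - sqdist X C) / sqdist X Z + (r ^+ 2 - sqdist Z C).
Proof.
rewrite -sqdist_eq0; case: X Z C => [x1 x2] [z1 z2] [c1 c2].
rewrite /power /inversion /sqdist /= => hd; by field.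
Qed.

Lemma inversion_radical_axis Z rho C r X :
  sqdist Z C = r ^+ 2 -> sqdist X C = r ^+ 2 -> X != Z ->
  on_radical_axis Z rho C r (inversion Z rho X).
Proof.
move=> hZ hX hXZ; apply/eqP; rewrite -subr_eq0 power_diff_inversion //.
by rewrite hZ hX !subrr mulr0 mul0r addr0.
Qed.

Lemma radical_axis_collinear Z rho C r (s : seq (R * R)) : Z != C ->
  (forall Y, Y \in s -> on_radical_axis Z rho C r Y) -> collinear s.
Proof.
case: Z C => [z1 z2] [c1 c2] hZC hs.
exists (2 * (c1 - z1)), (2 * (c2 - z2)),
  (c1 ^+ 2 + c2 ^+ 2 - z1 ^+ 2 - z2 ^+ 2 + rho ^+ 2 - r ^+ 2); split.
  apply: contraNneq hZC => -[h1 h2].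
  by rewrite xpair_eqE; apply/andP; split; apply/eqP; lra.
apply/allP => -[y1 y2] /hs; rewrite /on_radical_axis /power /sqdist /= => hY.
rewrite /= -subr_eq0; apply/eqP.
have -> : 2 * (c1 - z1) * y1 + 2 * (c2 - z2) * y2 -
    (c1 ^+ 2 + c2 ^+ 2 - z1 ^+ 2 - z2 ^+ 2 + rho ^+ 2 - r ^+ 2) =
  ((y1 - z1) ^+ 2 + (y2 - z2) ^+ 2 - rho ^+ 2) -
  ((y1 - c1) ^+ 2 + (y2 - c2) ^+ 2 - r ^+ 2) by ring.
by rewrite hY subrr.
Qed.

Lemma inversion_of_concyclic Z rho C r (s : seq (R * R)) :
  Z != C -> sqdist Z C = r ^+ 2 ->
  (forall X, X \in s -> sqdist X C = r ^+ 2 /\ X != Z) ->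
  collinear (map (inversion Z rho) s) /\
  forall X, X \in s -> on_radical_axis Z rho C r (inversion Z rho X).
Proof.
move=> hZC hZ hs.
have rad X : X \in s -> on_radical_axis Z rho C r (inversion Z rho X).
  by case/hs => hX hXZ; exact: inversion_radical_axis.
split=> //; apply: (@radical_axis_collinear Z rho C r) => // _ /mapP [X hX ->].
exact: rad.
Qed.

Lemma focus_on_axial_circle m r c :
  r ^+ 2 = m ^+ 2 + c ^+ 2 -> sqdist (- c, 0) (0, m) = r ^+ 2.
Proof. by rewrite /sqdist /= => ->; ring. Qed.

Lemma focus_ne_axial_centre c m : c != 0 -> (- c, 0) != (0, m).
Proof. by move=> hc; rewrite xpair_eqE negb_and oppr_eq0 hc. Qed.

Lemma on_axial_circle m r c X : r ^+ 2 = m ^+ 2 + c ^+ 2 ->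
  X.1 ^+ 2 + X.2 ^+ 2 - 2 * X.2 * m = c ^+ 2 -> sqdist X (0, m) = r ^+ 2.
Proof. by case: X => x y; rewrite /sqdist /= => -> <-; ring. Qed.

Lemma interior_not_on_tangent a b P F : a != 0 -> b != 0 ->
  P.1 ^+ 2 / a ^+ 2 + P.2 ^+ 2 / b ^+ 2 = 1 ->
  F.1 ^+ 2 / a ^+ 2 + F.2 ^+ 2 / b ^+ 2 < 1 -> ~ on_tangent a b P F.
Proof.
case: P F => [p1 p2] [f1 f2] ha hb; rewrite /on_tangent /= => hP hF hT.
pose x := f1 / a; pose y := f2 / b; pose p := p1 / a; pose q := p2 / b.
have eP : p ^+ 2 + q ^+ 2 = 1 by rewrite /p /q !expr_div_n.
have eF : x ^+ 2 + y ^+ 2 < 1 by rewrite /x /y !expr_div_n.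
have eT : x * p + y * q = 1 by rewrite -hT /x /y /p /q; field; rewrite ha hb.
(* Cauchy-Schwarz: (x p + y q)^2 <= (x^2 + y^2) (p^2 + q^2) *)
have CS : (x * p + y * q) ^+ 2 + (x * q - y * p) ^+ 2 =
  (x ^+ 2 + y ^+ 2) * (p ^+ 2 + q ^+ 2) by ring.
rewrite eT eP mulr1 expr1n in CS.
by have := sqr_ge0 (x * q - y * p); lra.
Qed.

Lemma tangents_meet_unique a b P P' X Y : a != 0 -> b != 0 ->
  P.1 * P'.2 - P.2 * P'.1 != 0 ->
  on_tangent a b P X -> on_tangent a b P' X ->
  on_tangent a b P Y -> on_tangent a b P' Y -> X = Y.
Proof.
case: P P' X Y => [p1 p2] [q1 q2] [x1 x2] [y1 y2] ha hb /= hdet.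
rewrite /on_tangent /= => hPX hQX hPY hQY.
(* the difference X - Y is conjugate to both P and P' *)
pose polar (T : R * R) := (x1 - y1) * T.1 / a ^+ 2 + (x2 - y2) * T.2 / b ^+ 2.
have eP : polar (p1, p2) = 0 by rewrite -(subrr 1) -{1}hPX -hPY /polar /=; ring.
have eQ : polar (q1, q2) = 0 by rewrite -(subrr 1) -{1}hQX -hQY /polar /=; ring.
have e1 : (x1 - y1) * (p1 * q2 - p2 * q1) =
    a ^+ 2 * (q2 * polar (p1, p2) - p2 * polar (q1, q2)).
  by rewrite /polar /=; field; rewrite ha hb.
have e2 : (x2 - y2) * (p1 * q2 - p2 * q1) =
    b ^+ 2 * (p1 * polar (q1, q2) - q1 * polar (p1, p2)).
  by rewrite /polar /=; field; rewrite ha hb.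
rewrite eP eQ !mulr0 subrr !mulr0 in e1 e2.
have cancel_det z : z * (p1 * q2 - p2 * q1) = 0 -> z = 0.
  by move/eqP; rewrite mulf_eq0 (negbTE hdet) orbF => /eqP.
by rewrite (subr0_eq (cancel_det _ e1)) (subr0_eq (cancel_det _ e2)).
Qed.
End PlaneGeometry.

(* The configuration of the theorem, with the square roots abstracted away:
   c plays the focal distance and s the value sqrt (1 - u^2).  The vertices
   P1, P3 are "upper" vertices (a U, b s) with U = u, -u, and P2, P4 are
   "lower" vertices with abscissa a w / (c^2 s) for w = -t, t. *)
Section FourPeriodic.
Variables (R : rcfType) (a b c u s : R).
Hypotheses (ha : a != 0) (hb : b != 0) (hc : c != 0) (hs : s != 0).
Hypothesis hc2 : c ^+ 2 = a ^+ 2 - b ^+ 2.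
Hypothesis hs2 : s ^+ 2 = 1 - u ^+ 2.

Let sq_gt0 (x : R) : x != 0 -> 0 < x ^+ 2.
Proof. by move=> hx; rewrite lt_def sqrf_eq0 hx sqr_ge0. Qed.

Definition upper_vertex (U : R) : R * R := (a * U, b * s).
Definition lower_vertex (w : R) : R * R :=
  (a * w / (c ^+ 2 * s), - b ^+ 3 / (c ^+ 2 * s)).

Definition C_height : R := (c ^+ 2 * u ^+ 2 - a ^+ 2 + 2 * b ^+ 2) / (2 * b * s).
Definition C_radius : R := (a ^+ 2 - c ^+ 2 * u ^+ 2) / (2 * b * s).

Lemma C_through_foci : C_radius ^+ 2 = C_height ^+ 2 + c ^+ 2.
Proof. by rewrite /C_radius /C_height; field: hc2 hs2; rewrite hs hb. Qed.

Definition Delta : R := a ^+ 2 + (u ^+ 2 - 2) * c ^+ 2.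
Hypothesis hDelta : Delta != 0.
Let Delta_def : Delta = a ^+ 2 + (u ^+ 2 - 2) * c ^+ 2. Proof. by []. Qed.

Definition C'_height : R := - (2 * b * c ^+ 2 * s) / Delta.
Definition C'_radius : R := c * (c ^+ 2 * u ^+ 2 - a ^+ 2) / Delta.

Lemma C'_through_foci : `|C'_radius| ^+ 2 = C'_height ^+ 2 + c ^+ 2.
Proof.
by rewrite real_normK ?num_real // /C'_radius /C'_height; field: Delta_def hc2 hs2.
Qed.

Definition corner (U w : R) : R * R :=
  (a * (U * b ^+ 2 - s * w) / Delta, b * (s * (b ^+ 2 - c ^+ 2) + U * w) / Delta).

Lemma upper_vertex_off_axis U x : upper_vertex U != (x, 0).
Proof. by rewrite xpair_eqE negb_and /= mulf_neq0 ?orbT. Qed.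

Lemma lower_vertex_off_axis w x : lower_vertex w != (x, 0).
Proof.
by rewrite xpair_eqE negb_and /= mulf_neq0 ?orbT ?oppr_eq0 ?expf_neq0 ?invr_neq0 ?mulf_neq0.
Qed.

Section Signs.
Variables U w : R.
Hypothesis hU : U ^+ 2 = u ^+ 2.
Hypothesis hw : w ^+ 2 = a ^+ 2 * (a ^+ 2 - 2 * b ^+ 2) - c ^+ 4 * u ^+ 2.

Lemma upper_vertex_on_C : let X := upper_vertex U in
  X.1 ^+ 2 + X.2 ^+ 2 - 2 * X.2 * C_height = c ^+ 2.
Proof. by rewrite /C_height /=; field: hc2 hs2 hU; rewrite hs hb. Qed.

Lemma lower_vertex_on_C : let X := lower_vertex w in
  X.1 ^+ 2 + X.2 ^+ 2 - 2 * X.2 * C_height = c ^+ 2.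
Proof. by rewrite /C_height /=; field: hc2 hs2 hw; rewrite hs hb hc. Qed.

Lemma corner_on_tangents :
  on_tangent a b (upper_vertex U) (corner U w) /\
  on_tangent a b (lower_vertex w) (corner U w).
Proof.
rewrite /on_tangent /=; split.
  by field: Delta_def hc2 hs2 hU hw; rewrite ha hb hDelta.
by field: Delta_def hc2 hs2 hU hw; rewrite ha hb hc hs hDelta.
Qed.

Lemma corner_on_C' : let X := corner U w in
  X.1 ^+ 2 + X.2 ^+ 2 - 2 * X.2 * C'_height = c ^+ 2.
Proof. by rewrite /C'_height /=; field: Delta_def hc2 hs2 hU hw; rewrite ?ha ?hb ?hc ?hs hDelta. Qed.

(* Key factorisation: the tangent lines at the two vertices are not parallel
   because (U b^2 + s w)(U b^2 - s w) = Delta (b^2 + c^2 s^2) is nonzero. *)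
Lemma tangent_directions_factor :
  (U * b ^+ 2 + s * w) * (U * b ^+ 2 - s * w) = Delta * (b ^+ 2 + c ^+ 2 * s ^+ 2).
Proof. by ring: Delta_def hc2 hs2 hU hw. Qed.

Lemma corner_unique Q :
  on_tangent a b (upper_vertex U) Q -> on_tangent a b (lower_vertex w) Q ->
  Q = corner U w.
Proof.
move=> hQ1 hQ2; have [hC1 hC2] := corner_on_tangents.
apply: (tangents_meet_unique ha hb _ hQ1 hQ2 hC1 hC2) => /=.
have -> : a * U * (- b ^+ 3 / (c ^+ 2 * s)) - b * s * (a * w / (c ^+ 2 * s)) =
    - (a * b * (U * b ^+ 2 + s * w)) / (c ^+ 2 * s).
  by field; rewrite hc hs.
have hsum : U * b ^+ 2 + s * w != 0.
  have hpos : Delta * (b ^+ 2 + c ^+ 2 * s ^+ 2) != 0.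
    by rewrite mulf_neq0 // lt0r_neq0 // addr_gt0 ?sq_gt0 // mulr_gt0 ?sq_gt0.
  by apply: contra_neq hpos => hz; rewrite -tangent_directions_factor hz mul0r.
by rewrite mulf_neq0 ?invr_neq0 ?oppr_eq0 ?mulf_neq0 ?expf_neq0.
Qed.

(* The focus lies inside the ellipse, hence on no tangent line. *)
Lemma upper_tangent_avoids_focus Q :
  on_tangent a b (upper_vertex U) Q -> Q != (- c, 0).
Proof.
move=> hQ; apply/eqP => eQ; rewrite eQ in hQ.
apply: (interior_not_on_tangent ha hb _ _ hQ) => /=.
  by field: hs2 hU; rewrite ha hb.
rewrite sqrrN hc2 expr0n /= mul0r addr0.
have -> : (a ^+ 2 - b ^+ 2) / a ^+ 2 = 1 - b ^+ 2 / a ^+ 2 by field; rewrite ha.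
by rewrite ltrBlDr ltrDl divr_gt0 ?sq_gt0.
Qed.

End Signs.

(* t plays sqrt (a^2 (a^2 - 2 b^2) - c^4 u^2). *)
Variable t : R.
Hypothesis ht2 : t ^+ 2 = a ^+ 2 * (a ^+ 2 - 2 * b ^+ 2) - c ^+ 4 * u ^+ 2.
Let hu' : (- u) ^+ 2 = u ^+ 2. Proof. exact: sqrrN. Qed.
Let ht2' : (- t) ^+ 2 = a ^+ 2 * (a ^+ 2 - 2 * b ^+ 2) - c ^+ 4 * u ^+ 2.
Proof. by rewrite sqrrN. Qed.

Definition four_periodic : seq (R * R) :=
  [:: upper_vertex u; lower_vertex (- t); upper_vertex (- u); lower_vertex t].

Lemma four_periodic_on_C X : X \in four_periodic ->
  sqdist X (0, C_height) = C_radius ^+ 2 /\ X != (- c, 0).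
Proof.
rewrite !inE => /or4P [] /eqP ->;
  split; rewrite ?upper_vertex_off_axis ?lower_vertex_off_axis //;
  apply: on_axial_circle C_through_foci _;
  by [exact: upper_vertex_on_C | exact: lower_vertex_on_C].
Qed.

Definition outer_polygon : seq (R * R) :=
  [:: corner u (- t); corner (- u) (- t); corner (- u) t; corner u t].

Lemma outer_polygon_vertices Q1 Q2 Q3 Q4 :
  on_tangent a b (upper_vertex u) Q1 -> on_tangent a b (lower_vertex (- t)) Q1 ->
  on_tangent a b (lower_vertex (- t)) Q2 -> on_tangent a b (upper_vertex (- u)) Q2 ->
  on_tangent a b (upper_vertex (- u)) Q3 -> on_tangent a b (lower_vertex t) Q3 ->
  on_tangent a b (lower_vertex t) Q4 -> on_tangent a b (upper_vertex u) Q4 ->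
  [:: Q1; Q2; Q3; Q4] = outer_polygon.
Proof.
move=> h11 h12 h22 h23 h33 h34 h44 h41.
by rewrite (corner_unique (erefl (u ^+ 2)) ht2' h11 h12) (corner_unique hu' ht2' h23 h22)
  (corner_unique hu' ht2 h33 h34) (corner_unique (erefl (u ^+ 2)) ht2 h41 h44).
Qed.

Lemma outer_polygon_on_C' X : X \in outer_polygon ->
  sqdist X (0, C'_height) = `|C'_radius| ^+ 2 /\ X != (- c, 0).
Proof.
have corner_ok U w : U ^+ 2 = u ^+ 2 ->
    w ^+ 2 = a ^+ 2 * (a ^+ 2 - 2 * b ^+ 2) - c ^+ 4 * u ^+ 2 ->
    sqdist (corner U w) (0, C'_height) = `|C'_radius| ^+ 2 /\ corner U w != (- c, 0).
  move=> hU hw; split; first exact: on_axial_circle C'_through_foci (corner_on_C' hU hw).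
  exact: (upper_tangent_avoids_focus hU (proj1 (corner_on_tangents hU hw))).
by rewrite !inE => /or4P [] /eqP ->; apply: corner_ok.
Qed.

End FourPeriodic.

Section Admissibility.
Variable R : rcfType.
Implicit Types a b u : R.

Lemma focal_distance a b : 0 < b -> b < a ->
  cfoc a b != 0 /\ cfoc a b ^+ 2 = a ^+ 2 - b ^+ 2.
Proof.
move=> hb hba; have hab : 0 < a ^+ 2 - b ^+ 2 by nra.
by rewrite /cfoc sqr_sqrtr ?ltW // lt0r_neq0 ?sqrtr_gt0.
Qed.

Lemma umax_bound a b u : 0 < b -> b < a -> Num.sqrt 2 < a / b -> `|u| < umax a b ->
  cfoc a b ^+ 4 * u ^+ 2 < a ^+ 2 * (a ^+ 2 - 2 * b ^+ 2).
Proof.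
move=> hb hba h2 hu; have [hc0 hc2] := focal_distance hb hba.
have ha : 0 < a by exact: lt_trans hba.
have h2b : 0 < a ^+ 2 - 2 * b ^+ 2.
  rewrite ltr_pdivlMr // in h2.
  have e2 : Num.sqrt 2 ^+ 2 = 2 :> R by rewrite sqr_sqrtr // ler0n.
  have hq : 0 <= Num.sqrt 2 * b by rewrite mulr_ge0 // ?sqrtr_ge0 ?ltW.
  have : (Num.sqrt 2 * b) ^+ 2 < a ^+ 2 by nra.
  by rewrite exprMn e2 subr_gt0.
set c := cfoc a b in hc0 hc2 hu *; set g := Num.sqrt (a ^+ 2 - 2 * b ^+ 2) in hu.
have hg2 : g ^+ 2 = a ^+ 2 - 2 * b ^+ 2 by rewrite sqr_sqrtr ?ltW.
have hc2p : 0 < c ^+ 2 by rewrite lt_def sqrf_eq0 hc0 sqr_ge0.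
move: hu; rewrite /umax -/c mulrAC ltr_pdivlMr // => hu.
have h0 : 0 <= `|u| * c ^+ 2 by rewrite mulr_ge0 ?normr_ge0 ?sqr_ge0.
have := ltr_pM h0 h0 hu hu; rewrite -!expr2.
by rewrite !exprMn real_normK ?num_real // hg2 -exprD mulrC.
Qed.

(* Consequently |u| < 1, so that the parametrisation is well defined. *)
Lemma admissible_parameters a b u :
  0 < b -> b < a -> Num.sqrt 2 < a / b -> `|u| < umax a b ->
  let c := cfoc a b in let s := Num.sqrt (1 - u ^+ 2) in
  let t2 := a ^+ 2 * (a ^+ 2 - 2 * b ^+ 2) - c ^+ 4 * u ^+ 2 in
  [/\ c != 0, c ^+ 2 = a ^+ 2 - b ^+ 2, s != 0, s ^+ 2 = 1 - u ^+ 2 &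
      Num.sqrt t2 ^+ 2 = t2].
Proof.
move=> hb hba h2 hu c s t2; have [hc0 hc2] := focal_distance hb hba.
have ht2 := umax_bound hb hba h2 hu.
have hc4 : cfoc a b ^+ 4 = (a ^+ 2 - b ^+ 2) ^+ 2 by rewrite -hc2 -exprM.
have hu1 : 0 < 1 - u ^+ 2.
  have hb4 : 0 < b ^+ 4 by rewrite exprn_gt0.
  have hc4p : 0 < cfoc a b ^+ 4 by rewrite hc4 lt_def sqrf_eq0 -hc2 sqrf_eq0 hc0 sqr_ge0.
  nra.
split=> //; rewrite /s /t2.
- by rewrite lt0r_neq0 ?sqrtr_gt0.
- by rewrite sqr_sqrtr ?ltW.
- by rewrite sqr_sqrtr // subr_ge0 ltW.
Qed.

Lemma vertices_parametrisation a b u :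
  let c := cfoc a b in let s := Num.sqrt (1 - u ^+ 2) in
  let t := Num.sqrt (a ^+ 2 * (a ^+ 2 - 2 * b ^+ 2) - c ^+ 4 * u ^+ 2) in
  [/\ P1 a b u = upper_vertex a b s u, P2 a b u = lower_vertex a b c s (- t),
      P3 a b u = upper_vertex a b s (- u) & P4 a b u = lower_vertex a b c s t].
Proof. by split; rewrite /P2 /P3 /upper_vertex /lower_vertex ?mulrN. Qed.

End Admissibility.

Theorem mainTheorem6 (R : rcfType) (a b u : R)
  (Q1 Q2 Q3 Q4 : R * R) :
  0 < b -> b < a -> Num.sqrt 2 < a / b ->
  `|u| < umax a b ->
  a ^+ 2 + (u ^+ 2 - 2) * (cfoc a b) ^+ 2 != 0 ->
  (* Q_i = P_i' : intersection of the tangents at P_i and P_(i+1) *)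
  on_tangent a b (P1 a b u) Q1 -> on_tangent a b (P2 a b u) Q1 ->
  on_tangent a b (P2 a b u) Q2 -> on_tangent a b (P3 a b u) Q2 ->
  on_tangent a b (P3 a b u) Q3 -> on_tangent a b (P4 a b u) Q3 ->
  on_tangent a b (P4 a b u) Q4 -> on_tangent a b (P1 a b u) Q4 ->
  let f1 := (- cfoc a b, 0) in
  let inv := inversion f1 1 in
  (collinear [:: inv (P1 a b u); inv (P2 a b u); inv (P3 a b u); inv (P4 a b u)] /\
   forall X, X \in [:: P1 a b u; P2 a b u; P3 a b u; P4 a b u] ->
     on_radical_axis f1 1 (Ccenter a b u) (Cradius a b u) (inv X)) /\
  (collinear [:: inv Q1; inv Q2; inv Q3; inv Q4] /\
   forall X, X \in [:: Q1; Q2; Q3; Q4] ->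
     on_radical_axis f1 1 (C'center a b u) (C'radius a b u) (inv X)).
Proof.
move=> hb hba hsq hu hDelta hQ1 hQ1' hQ2 hQ2' hQ3 hQ3' hQ4 hQ4' f1 inv.
have [hc hc2 hs hs2 ht2] := admissible_parameters hb hba hsq hu.
have [eP1 eP2 eP3 eP4] := vertices_parametrisation a b u.
rewrite eP1 eP2 eP3 eP4 in hQ1 hQ1' hQ2 hQ2' hQ3 hQ3' hQ4 hQ4' *.
have ha : a != 0 by rewrite lt0r_neq0 // (lt_trans hb hba).
have hb0 : b != 0 by rewrite lt0r_neq0.
have eQ := outer_polygon_vertices ha hb0 hc hs hc2 hs2 hDelta ht2
  hQ1 hQ1' hQ2 hQ2' hQ3 hQ3' hQ4 hQ4'.
split.
- apply: (inversion_of_concyclic _ (s := [:: _; _; _; _])).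
  + exact: focus_ne_axial_centre.
  + exact: focus_on_axial_circle (C_through_foci hb0 hs hc2 hs2).
  + exact: (four_periodic_on_C hb0 hc hs hc2 hs2 ht2).
- apply: (inversion_of_concyclic _ (s := [:: Q1; Q2; Q3; Q4])).
  + exact: focus_ne_axial_centre.
  + exact: focus_on_axial_circle (C'_through_foci hc2 hs2 hDelta).
  + rewrite eQ; exact: (outer_polygon_on_C' ha hb0 hc hs hc2 hs2 hDelta ht2).
Qed.
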